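(* Let $K\ge1$, $p_D\in(0,1]$, $p^+\in(0,1)$, and let $\varphi^+=(\varphi^+_y)_{y\in[K]}$, $\varphi^-=(\varphi^-_y)_{y\in[K]}$ be fixed probability vectors (nonnegative entries summing to $1$). For unknowns $(q_y,q_y^+)_{y\in[K]}$ define, for $\hat y\in[K]$, \[ \Delta\mathrm{s.p.}(\hat y)=\frac{p_D}{p^+(1-p^+)}\Bigl(\varphi^+_{\hat y}(p^+-q^+)-(q_{\hat y}p^+-q^+_{\hat y})\Bigr)+(\varphi^+_{\hat y}-\varphi^-_{\hat y})\Bigl(1-p_D\frac{1-q^+}{1-p^+}\Bigr),\quad q^+:=\sum_{y}q_y^+. \] Set $b_y:=p^+(1-p^+)\frac{1-p_D}{p_D}(\varphi^+_y-\varphi^-_y)$ and $c_y:=(1-p^+)\varphi^+_y+p^+\varphi^-_y$. Then the values $(q_y,q_y^+)_{y}$ with $\sum_y q_y=1$ and $0\le q_y^+\le q_y$ for all $y$ satisfying $\Delta\mathrm{s.p.}(\hat y)=0$ for all $\hat y\in[K]$ are exactly those $(q_y,q_y^+)_y$ such that for all $y\in[K]$ \[ p^+q_y-q_y^+-\Bigl(p^+-\sum_{y'=1}^Kq^+_{y'}\Bigr)c_y-b_y=0,\qquad \sum_y q_y=1,\qquad 0\le q_y^+\le q_y. \] Furthermore, this set of solutions is non-empty if and only if \[ \{x\in\mathbb{R}^{K+1}: -(1-p^+)x_i+c_i+x_{K+1}\le0\text{ and }p^+x_i+x_{K+1}\le0\ \forall i\in[K]\}\subseteq\Bigl\{x\in\mathbb{R}^{K+1}:\sum_{i=1}^K(p^+c_i+b_i)x_i+x_{K+1}\le0\Bigr\}.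 \]
   Context: Interpretation: in a classification problem with labels $Y\in[K]$, prediction $\hat Y$, group attribute $A\in\{0,1\}$ and memorization indicator $D$ (with $\hat Y=Y$ a.s. on $D=1$), $p_D=\mathbb{P}(D=1)$, $p^+=\mathbb{P}(A=1)$, $q_y=\mathbb{P}(Y=y\mid D=1)$, $q_y^+=\mathbb{P}(Y=y,A=1\mid D=1)$, $\varphi^{\pm}_y=\mathbb{P}(\hat Y=y\mid D=0,A=1\text{ resp. }0)$; the displayed formula is the statistical parity gap of the memorizing classifier. In this result $\varphi^\pm$, $p_D$, $p^+$ are treated as fixed parameters independent of the unknowns $(q_y,q_y^+)$. *)

From HB Require Import structures.
From mathcomp Require Import all_boot all_order all_algebra.
From mathcomp Require Import reals.
Set Implicit Arguments. Unset Strict Implicit. Unset Printing Implicit Defensive.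
Import Order.TTheory GRing.Theory Num.Theory.
Local Open Scope ring_scope.

Section Defs.
Variables (R : realType) (K : nat).

Definition qplus (qp : 'I_K -> R) : R := \sum_(y < K) qp y.

Definition dsp (pD pp : R) (phip phim q qp : 'I_K -> R) (yh : 'I_K) : R :=
  pD / (pp * (1 - pp)) *
    (phip yh * (pp - qplus qp) - (q yh * pp - qp yh))
  + (phip yh - phim yh) * (1 - pD * ((1 - qplus qp) / (1 - pp))).

Definition bcoef (pD pp : R) (phip phim : 'I_K -> R) (y : 'I_K) : R :=
  pp * (1 - pp) * ((1 - pD) / pD) * (phip y - phim y).

Definition ccoef (pp : R) (phip phim : 'I_K -> R) (y : 'I_K) : R :=
  (1 - pp) * phip y + pp * phim y.

Definition prob_vec (phi : 'I_K -> R) : Prop :=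
  (forall y, 0 <= phi y) /\ \sum_(y < K) phi y = 1.

End Defs.

From HB Require Import structures.
From mathcomp Require Import all_boot all_order all_algebra.
From mathcomp Require Import reals ring lra.
Import Order.TTheory GRing.Theory Num.Theory.
Local Open Scope ring_scope.

(* Each Delta s.p.(yh) is a nonzero multiple of the residual of the yh-th linear
   equation, which gives the first equivalence.  In the linear system, q is
   determined by qp, and writing a := pp c + b and Q := sum qp, feasibility
   amounts to finding Q and qp >= 0 with sum qp = Q and
   (1 - pp) qp_y >= Q c_y - a_y, i.e. to a level Q with
   Q c(S) - a(S) <= (1 - pp) Q for every set S of labels.  Testing the dual
   condition on x = -(al 1_S1 + be 1_S2), t = 0 shows that every lower bound
   on Q coming from a set S1 lies below every upper bound coming from a set S2,
   so the largest lower bound is such a level. *)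

Lemma dspE (R : realType) (K : nat) (pD pp : R) (phip phim q qp : 'I_K -> R) yh :
  pD != 0 -> pp != 0 -> 1 - pp != 0 ->
  dsp pD pp phip phim q qp yh = - (pD / (pp * (1 - pp))) *
   (pp * q yh - qp yh - (pp - qplus qp) * ccoef pp phip phim yh
    - bcoef pD pp phip phim yh).
Proof. by move=> pD0 pp0 pp1; rewrite /dsp /bcoef /ccoef; field; rewrite pD0 pp0 pp1. Qed.

Lemma dsp_eq0 (R : realType) (K : nat) (pD pp : R) (phip phim q qp : 'I_K -> R) yh :
  pD != 0 -> pp != 0 -> 1 - pp != 0 ->
  (dsp pD pp phip phim q qp yh == 0) =
  (pp * q yh - qp yh - (pp - qplus qp) * ccoef pp phip phim yh
   - bcoef pD pp phip phim yh == 0).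
Proof.
move=> pD0 pp0 pp1; have k_neq0 : - (pD / (pp * (1 - pp))) != 0.
  by rewrite oppr_eq0 mulf_neq0 ?invr_eq0 ?mulf_neq0.
by rewrite dspE // mulf_eq0 (negPf k_neq0).
Qed.

Lemma sum_ccoef (R : realType) (K : nat) (pp : R) (phip phim : 'I_K -> R) :
  prob_vec phip -> prob_vec phim -> \sum_(y < K) ccoef pp phip phim y = 1.
Proof. by move=> [_ sp] [_ sm]; rewrite big_split /= -!mulr_sumr sp sm; ring. Qed.

Lemma sum_bcoef (R : realType) (K : nat) (pD pp : R) (phip phim : 'I_K -> R) :
  prob_vec phip -> prob_vec phim -> \sum_(y < K) bcoef pD pp phip phim y = 0.
Proof. by move=> [_ sp] [_ sm]; rewrite -mulr_sumr sumrB sp sm subrr mulr0. Qed.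

Lemma sum_mul_indicator (R : pzRingType) (I : finType) (f : I -> R) (S : {set I}) :
  \sum_i f i * (i \in S)%:R = \sum_(i in S) f i.
Proof.
by rewrite [RHS]big_mkcond; apply: eq_bigr => i _; case: (i \in S); rewrite ?mulr1 ?mulr0.
Qed.

Lemma sum_max0 (R : realDomainType) (I : finType) (f : I -> R) :
  \sum_i Num.max 0 (f i) = \sum_(i in [set i | 0 < f i]) f i.
Proof.
by rewrite [RHS]big_mkcond; apply: eq_bigr => i _; rewrite inE /Order.max; case: ifP.
Qed.

Section LinearSystem.
Variables (R : realType) (K : nat) (pp : R) (c b : 'I_K -> R).

Definition solution (q qp : 'I_K -> R) : Prop :=
  (forall y, pp * q y - qp y - (pp - qplus qp) * c y - b y = 0) /\
  \sum_(y < K) q y = 1 /\ (forall y, 0 <= qp y <= q y).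

Definition dual_condition : Prop :=
  forall (x : 'I_K -> R) (t : R),
    (forall i, - (1 - pp) * x i + \sum_(j < K) c j * x j + t <= 0 /\ pp * x i + t <= 0) ->
    \sum_(i < K) (pp * c i + b i) * x i + t <= 0.

Lemma dual_condition_of_solution q qp : solution q qp -> dual_condition.
Proof.
move=> [E [sum_q qp_q]] x t hx.
set Q := qplus qp; set C := \sum_(j < K) c j * x j.
(* weak duality: the objective is a nonnegative combination of the constraints *)
have -> : \sum_(i < K) (pp * c i + b i) * x i + t =
    \sum_i (q i - qp i) * (pp * x i + t) + \sum_i qp i * (- (1 - pp) * x i + C + t).
  have Ei i : (pp * c i + b i) * x i = pp * (q i * x i) - qp i * x i + Q * (c i * x i).
    by rewrite -(subr0_eq (E i)) -/Q; ring.
  have Fi i : (q i - qp i) * (pp * x i + t) + qp i * (- (1 - pp) * x i + C + t)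
      = pp * (q i * x i) - qp i * x i + (t * q i + C * qp i) by ring.
  rewrite (eq_bigr _ (fun i _ => Ei i)) -big_split /= (eq_bigr _ (fun i _ => Fi i)).
  by rewrite !big_split /= -!mulr_sumr -/C sum_q /Q /qplus; ring.
rewrite -[X in _ <= X](addr0 0); apply: lerD; apply: sumr_le0 => i _;
  have [h1 h2] := hx i; have /andP[qp0 qpq] := qp_q i; apply: mulr_ge0_le0 => //.
by rewrite subr_ge0.
Qed.

Local Notation a y := (pp * c y + b y).
Local Notation cS S := (\sum_(y in S) c y).
Local Notation aS S := (\sum_(y in S) a y).

Hypothesis pp_bounds : 0 < pp < 1.
Hypotheses (sum_c : \sum_(y < K) c y = 1) (sum_b : \sum_(y < K) b y = 0).

Lemma solution_of_level Q : (0 < K)%N ->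
  (forall S : {set 'I_K}, Q * cS S - aS S <= (1 - pp) * Q) -> exists q qp, solution q qp.
Proof.
move=> K_gt0 hQ; have /andP[pp_gt0 pp_lt1] := pp_bounds.
have pp0 : pp != 0 by rewrite gt_eqF.
have pp1 : 0 < 1 - pp by rewrite subr_gt0.
pose m y := Num.max 0 (Q * c y - a y) / (1 - pp).
pose y0 : 'I_K := Ordinal K_gt0.
pose s := Q - \sum_y m y.
pose qp y := m y + (if y == y0 then s else 0).
pose q y := (qp y + (pp - Q) * c y + b y) / pp.
have sum_qp : qplus qp = Q.
  by rewrite /qplus /qp big_split /= -big_mkcond big_pred1_eq /s; ring.
have s_ge0 : 0 <= s.
  rewrite /s subr_ge0 /m -mulr_suml sum_max0 sumrB -mulr_sumr ler_pdivrMr //.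
  by rewrite [Q * (1 - pp)]mulrC hQ.
exists q, qp; split; [|split].
- by move=> y; rewrite sum_qp /q; field.
- rewrite /q -mulr_suml !big_split /= -mulr_sumr sum_c sum_b -big_mkcond.
  by rewrite big_pred1_eq /s; field.
move=> y.
have mx0 : 0 <= Num.max 0 (Q * c y - a y) by rewrite le_max lexx.
have mx1 : Q * c y - a y <= Num.max 0 (Q * c y - a y) by rewrite le_max lexx orbT.
have my : m y * (1 - pp) = Num.max 0 (Q * c y - a y) by rewrite /m divfK ?gt_eqF.
have m_ge0 : 0 <= m y by rewrite /m divr_ge0 // ltW.
have m_le : m y <= qp y by rewrite /qp; case: (y == y0); lra.
by apply/andP; split; [lra | rewrite /q ler_pdivlMr //; nra].
Qed.

Section Dual.
Hypothesis dual : dual_condition.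

Lemma dual_two_sets (S1 S2 : {set 'I_K}) (al be : R) : 0 <= al -> 0 <= be ->
  (1 - pp) * (al + be) <= al * cS S1 + be * cS S2 -> 0 <= al * aS S1 + be * aS S2.
Proof.
move=> al0 be0 hc; have /andP[pp_gt0 pp_lt1] := pp_bounds.
pose x j := - (al * (j \in S1)%:R + be * (j \in S2)%:R).
have sum_x f : \sum_j f j * x j = - (al * \sum_(j in S1) f j + be * \sum_(j in S2) f j).
  rewrite -!sum_mul_indicator !mulr_sumr -big_split -sumrN /=.
  by apply: eq_bigr => j _; rewrite /x; ring.
have x_bounds i : 0 <= - x i <= al + be.
  by rewrite /x opprK; case: (i \in S1); case: (i \in S2); rewrite ?mulr1 ?mulr0; lra.
have := dual x 0; rewrite !sum_x !addr0 oppr_le0; apply=> i.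
by have /andP[x_le0 x_ge] := x_bounds i; rewrite !addr0; split; nra.
Qed.

Lemma dual_one_set (S : {set 'I_K}) : 1 - pp <= cS S -> 0 <= aS S.
Proof.
move=> hS; have := @dual_two_sets S S 1 0 ler01 (lexx 0).
by rewrite !mul0r !addr0 !mul1r; apply; rewrite mulr1.
Qed.

Lemma exists_level : exists Q, forall S : {set 'I_K}, Q * cS S - aS S <= (1 - pp) * Q.
Proof.
have /andP[pp_gt0 pp_lt1] := pp_bounds.
(* sets with c(S) < 1 - pp bound Q from below, the others from above *)
pose lb (S : {set 'I_K}) := if cS S < 1 - pp then aS S / (cS S - (1 - pp)) else 0.
pose Q := \big[Num.max/0]_(S : {set 'I_K}) lb S.
have lb_le S : lb S <= Q by rewrite /Q (bigD1 S) //= le_max lexx.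
exists Q => S; case: (ltgtP (cS S) (1 - pp)) => hS.
- by have := lb_le S; rewrite /lb hS ler_ndivrMr ?subr_lt0 //; lra.
- suff : Q * (cS S - (1 - pp)) <= aS S by lra.
  rewrite /Q; apply: (big_ind (fun v => v * (cS S - (1 - pp)) <= aS S)).
  + by rewrite mul0r; apply: dual_one_set; lra.
  + by move=> u v hu hv; rewrite /Order.max; case: ifP.
  move=> S2 _; rewrite /lb; case: ifP => hS2.
    have := @dual_two_sets S2 S (cS S - (1 - pp)) (1 - pp - cS S2).
    rewrite mulrAC ler_ndivrMr ?subr_lt0 //; nra.
  by rewrite mul0r; apply: dual_one_set; lra.
- by have := dual_one_set S; rewrite hS lexx => /(_ isT); lra.
Qed.

End Dual.

Lemma solution_of_dual_condition :
  (0 < K)%N -> dual_condition -> exists q qp, solution q qp.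
Proof. by move=> K_gt0 /exists_level [Q hQ]; exact: solution_of_level hQ. Qed.

End LinearSystem.

Theorem theorem9 (R : realType) (K : nat) (pD pp : R) (phip phim : 'I_K -> R) :
  (1 <= K)%N -> 0 < pD <= 1 -> 0 < pp < 1 ->
  prob_vec phip -> prob_vec phim ->
  (forall q qp : 'I_K -> R,
     ((\sum_(y < K) q y = 1 /\ (forall y, 0 <= qp y <= q y) /\
       (forall yh, dsp pD pp phip phim q qp yh = 0))
      <->
      ((forall y, pp * q y - qp y - (pp - qplus qp) * ccoef pp phip phim y
                  - bcoef pD pp phip phim y = 0) /\
       \sum_(y < K) q y = 1 /\ (forall y, 0 <= qp y <= q y))))
  /\
  ((exists q qp : 'I_K -> R,
      (forall y, pp * q y - qp y - (pp - qplus qp) * ccoef pp phip phim y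
                 - bcoef pD pp phip phim y = 0) /\
      \sum_(y < K) q y = 1 /\ (forall y, 0 <= qp y <= q y))
   <->
   (forall (x : 'I_K -> R) (xK1 : R),
      (forall i, - (1 - pp) * x i + \sum_(j < K) ccoef pp phip phim j * x j + xK1 <= 0
                 /\ pp * x i + xK1 <= 0) ->
      \sum_(i < K) (pp * ccoef pp phip phim i + bcoef pD pp phip phim i) * x i + xK1 <= 0)).
Proof.
move=> K_gt0 /andP[pD_gt0 _] pp_bounds phip_prob phim_prob.
have /andP[pp_gt0 pp_lt1] := pp_bounds.
have pp1_neq0 : 1 - pp != 0 by rewrite gt_eqF // subr_gt0.
have dsp0E q qp yh := @dsp_eq0 _ _ pD pp phip phim q qp yh
  (lt0r_neq0 pD_gt0) (lt0r_neq0 pp_gt0) pp1_neq0.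
split=> [q qp|].
  split=> [[sum_q [qp_q dsp0]] | [E [sum_q qp_q]]].
    by split=> // y; apply/eqP; rewrite -dsp0E dsp0.
  by do 2!split=> //; move=> yh; apply/eqP; rewrite dsp0E E.
split=> [[q [qp]]|]; first exact: dual_condition_of_solution.
apply: solution_of_dual_condition => //.
- exact: sum_ccoef.
- exact: sum_bcoef.
Qed.
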